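(* Let $(G,u,v,\alpha,\beta)$ be a Guvab. Then $W(\mu_k,\nu_k)\to0$ as $k\to\infty$ if and only if one of the following holds: (1) $0<\alpha\le\beta<1$; (2) $\alpha=\beta=1$ and $u=v$; (3) $G$ is not bipartite and $0=\alpha\le\beta<1$; (4) $\alpha=\beta=0$ and there exists a walk from $u$ to $v$ with an even number of steps.
   Context: A Guvab is a tuple $(G,u,v,\alpha,\beta)$ where $G$ is a finite, connected, simple graph, $u,v\in V(G)$, and $\alpha,\beta\in[0,1]$ with $\alpha\le\beta$. A random walk on $G$ with starting vertex $w$ and laziness $\gamma$ is the Markov chain $R_0=w$ and, for $i\ge1$, $R_i=R_{i-1}$ with probability $\gamma$ and $R_i=t$ with probability $\frac{1-\gamma}{\deg(R_{i-1})}$ for each neighbor $t$ of $R_{i-1}$. $\mu_k$ is the distribution after $k$ steps of the walk from $u$ with laziness $\alpha$, and $\nu_k$ that of the walk from $v$ with laziness $\beta$. $W(\mu,\nu)$ is the Wasserstein ($L^1$ optimal transport) distance with respect to the graph distance: the minimum over transportation plans (nonnegative $T$ on $V(G)\times V(G)$ with marginals $\mu,\nu$) of $\sum d(w_1,w_2)T(w_1,w_2)$. *)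

From HB Require Import structures.
From mathcomp Require Import all_boot all_order all_algebra.
From mathcomp Require Import all_classical all_reals.
From mathcomp Require Import topology normedtype sequences.
Set Implicit Arguments. Unset Strict Implicit. Unset Printing Implicit Defensive.
Import Order.TTheory GRing.Theory Num.Theory.
Local Open Scope ring_scope.

Section Guvab.
Variable V : finType.
Variable e : rel V.

Definition simple_graph : Prop := symmetric e /\ irreflexive e.

Definition walk_len (x y : V) (n : nat) : bool :=
  [exists p : n.-tuple V, path e x p && (last x p == y)].

Definition connected_graph : Prop := forall x y : V, exists n, walk_len x y n.

Definition bipartite : Prop :=
  exists f : V -> bool, forall x y, e x y -> f x != f y.

(* graph distance: length of a shortest walk (walks of length < #|V| suffice
   in a connected graph) *)
Definition gdist (x y : V) : nat := find (walk_len x y) (iota 0 #|V|).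

Variable R : realType.

Definition deg (x : V) : nat := #|[set y | e x y]|.

Definition trans (g : R) (x y : V) : R :=
  (if x == y then g else 0) + (if e x y then (1 - g) / (deg x)%:R else 0).

Fixpoint walk_dist (g : R) (w : V) (k : nat) : V -> R :=
  match k with
  | 0 => fun y => if y == w then 1 else 0
  | k'.+1 => fun y => \sum_(x : V) walk_dist g w k' x * trans g x y
  end.

Definition transport_plan (mu nu : V -> R) (P : V -> V -> R) : Prop :=
  (forall x y, 0 <= P x y) /\
  (forall x, \sum_(y : V) P x y = mu x) /\
  (forall y, \sum_(x : V) P x y = nu y).

Definition transport_cost (P : V -> V -> R) : R :=
  \sum_(x : V) \sum_(y : V) (gdist x y)%:R * P x y.

Definition wasserstein (mu nu : V -> R) : R :=
  inf [set c : R | exists P, transport_plan mu nu P /\ c = transport_cost P].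

End Guvab.

From HB Require Import structures.
From mathcomp Require Import all_boot all_order all_algebra.
From mathcomp Require Import all_classical all_reals.
From mathcomp Require Import topology normedtype sequences.
From mathcomp Require Import ring lra zify.
Import Order.TTheory GRing.Theory Num.Theory numFieldNormedType.Exports.
Set Implicit Arguments. Unset Strict Implicit. Unset Printing Implicit Defensive.
Local Open Scope classical_set_scope.
Local Open Scope ring_scope.

(* W(mu, nu) lies between max_y |mu y - nu y| and |V| * sum_y |mu y - nu y|
   (the upper bound from the coupling that keeps the common mass in place), so
   W(mu_k, nu_k) -> 0 iff mu_k - nu_k -> 0 pointwise.
   If the walk is lazy or G has an odd cycle, some power of the transition
   matrix has a positive column, and Doeblin's contraction argument makes every
   walk converge to the degree-proportional stationary distribution; this gives
   (1) and (3).  For alpha = beta = 0 on a bipartite graph the same argument,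
   run on one colour class with an even number of steps, makes walks from two
   vertices of the same colour merge, which gives (4); (2) is trivial.
   Conversely: if beta = 1 > alpha then nu_k is the Dirac mass at v while mu_k
   tends to the stationary distribution (alpha > 0) or, for alpha = 0, must
   leave v at every step; on a bipartite graph with alpha = 0 < beta, mu_k
   vanishes at u at odd times while nu_k(u) tends to a positive limit; and
   with alpha = beta = 0 and u, v of different colours mu_k and nu_k have
   disjoint supports. *)

Lemma cvg_sum0 (R : realType) (I : finType) (F : I -> nat -> R) :
  (forall i, F i @ \oo --> 0) -> (fun k => \sum_i F i k) @ \oo --> 0.
Proof.
move=> F0; have := cvg_big (x0 := 0) (P := predT) (r := index_enum I)
  (@add_continuous R) _ (fun i _ => F0 i).
by rewrite big1 //; apply.
Qed.

Lemma cvgn_comp_unbounded (R : realType) (phi : nat -> nat) (f : nat -> R) (l : R) :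
  (forall N, exists K, forall k, (K <= k)%N -> (N <= phi k)%N) ->
  f @ \oo --> l -> (fun k => f (phi k)) @ \oo --> l.
Proof.
move=> phi_unbounded; apply: cvg_comp => P [N _ HN].
have [K HK] := phi_unbounded N; exists K => // k /HK; exact: HN.
Qed.

Section Walks.
Variables (V : finType) (e : rel V).

Lemma walk_len0 x y : walk_len e x y 0 = (x == y).
Proof.
apply/existsP/idP => [[p /andP[_ /eqP <-]]|/eqP <-]; first by rewrite tuple0.
by exists [tuple]; rewrite /= eqxx.
Qed.

Lemma walk_lenS x y n :
  walk_len e x y n.+1 = [exists z, e x z && walk_len e z y n].
Proof.
apply/existsP/existsP => [[p]|[z /andP[exz /existsP[p /andP[pp lp]]]]].
  case/tupleP: p => z p /= /andP[/andP[exz pp] lp].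
  by exists z; rewrite exz; apply/existsP; exists p; rewrite pp.
by exists [tuple of z :: p]; rewrite /= exz pp.
Qed.

Lemma walk_len1 x y : walk_len e x y 1 = e x y.
Proof.
rewrite walk_lenS; apply/existsP/idP => [[z /andP[exz]]|exy].
  by rewrite walk_len0 => /eqP <-.
by exists y; rewrite exy walk_len0 eqxx.
Qed.

Lemma walk_lenD x y z m n :
  walk_len e x y m -> walk_len e y z n -> walk_len e x z (m + n).
Proof.
elim: m x => [|m IHm] x; first by rewrite walk_len0 => /eqP ->.
rewrite walk_lenS => /existsP[w /andP[exw wy]] yz.
by rewrite addSn walk_lenS; apply/existsP; exists w; rewrite exw IHm.
Qed.

Lemma walk_len_parity (f : V -> bool) :
  (forall x y, e x y -> f x != f y) ->
  forall x y n, walk_len e x y n -> f y = f x (+) odd n.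
Proof.
move=> f_proper x y n; elim: n x => [|n IHn] x.
  by rewrite walk_len0 => /eqP ->; rewrite addbF.
rewrite walk_lenS => /existsP[z /andP[exz /IHn ->]] /=.
by move: (f_proper _ _ exz); case: (f x); case: (f z); case: (odd n).
Qed.

Hypothesis e_sym : symmetric e.

Lemma walk_len_sym x y n : walk_len e x y n -> walk_len e y x n.
Proof.
elim: n x y => [|n IHn] x y; first by rewrite !walk_len0 eq_sym.
rewrite walk_lenS => /existsP[z /andP[exz /IHn zy]].
by rewrite -addn1; apply: walk_lenD zy _; rewrite walk_len1 e_sym.
Qed.

Lemma walk_len_pad x y m n : (exists z, e y z) -> walk_len e x y m ->
  (m <= n)%N -> ~~ odd (n - m) -> walk_len e x y n.
Proof.
move=> [z eyz] xy le_mn even_nm.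
have yy : walk_len e y y 2.
  by rewrite (_ : 2 = 1 + 1)%N //; apply: (@walk_lenD _ z); rewrite walk_len1 // e_sym.
have -> : n = (m + ((n - m)./2).*2)%N.
  by have := odd_double_half (n - m); rewrite (negbTE even_nm); lia.
elim: (n - m)./2 => [|t IHt]; first by rewrite addn0.
by rewrite doubleS -addn2 addnA; apply: walk_lenD IHt yy.
Qed.

End Walks.

Section GraphDistance.
Variables (V : finType) (e : rel V).

Lemma gdist_refl x : gdist e x x = 0%N.
Proof.
rewrite /gdist; have : (0 < #|V|)%N by apply/card_gt0P; exists x.
by case: #|V| => // n _; rewrite /= walk_len0 eqxx.
Qed.

Lemma gdist_gt0 x y : x != y -> (0 < gdist e x y)%N.
Proof.
rewrite /gdist; have : (0 < #|V|)%N by apply/card_gt0P; exists x.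
by case: #|V| => // n _ neq_xy; rewrite /= walk_len0 (negbTE neq_xy).
Qed.

Lemma gdist_le_card x y : (gdist e x y <= #|V|)%N.
Proof.
by rewrite /gdist; apply: leq_trans (find_size _ _) _; rewrite size_iota.
Qed.

End GraphDistance.

Section Doeblin.
Variables (R : realFieldType) (V : finType) (S : pred V) (z0 : V) (eps : R).
Hypothesis z0S : z0 \in S.

Lemma doeblin_sum_bounds (Q h : V -> R) c D :
  (forall z, 0 <= Q z) -> \sum_z Q z = 1 ->
  (forall z, z \notin S -> Q z = 0) -> eps <= Q z0 ->
  (forall z, z \in S -> c <= h z <= c + D) ->
  eps * h z0 + (1 - eps) * c <= \sum_z Q z * h z
  <= eps * h z0 + (1 - eps) * (c + D).
Proof.
move=> Q_ge0 Q_sum1 Q_out eps_le h_bounds.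
pose rest z := Q z - (if z == z0 then eps else 0).
have split_sum F : \sum_z Q z * F z = eps * F z0 + \sum_z rest z * F z.
  rewrite (bigD1 z0) //= [in RHS](bigD1 z0) //= /rest eqxx addrA.
  congr (_ + _); first ring.
  by apply: eq_bigr => z /negbTE ->; rewrite subr0.
have rest_ge0 z : 0 <= rest z.
  by rewrite /rest; case: eqP => [->|_]; rewrite subr_ge0.
have rest_out z : z \notin S -> rest z = 0.
  move=> zS; have /negbTE neq_zz0 : z != z0 by apply: contraNneq zS => ->.
  by rewrite /rest Q_out // neq_zz0 subr0.
have rest_sum : \sum_z rest z = 1 - eps.
  have := split_sum (fun=> 1); under eq_bigr do rewrite mulr1.
  by under [in RHS]eq_bigr do rewrite mulr1; rewrite Q_sum1 mulr1 => ->; ring.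
have bound (a b : V -> R) : (forall z, z \in S -> a z <= b z) ->
    \sum_z rest z * a z <= \sum_z rest z * b z.
  move=> le_ab; apply: ler_sum => z _; case: (boolP (z \in S)) => zS.
    by rewrite ler_wpM2l // le_ab.
  by rewrite rest_out // !mul0r.
rewrite split_sum !lerD2l -rest_sum !mulr_suml.
by apply/andP; split; apply: bound => z /h_bounds /andP[].
Qed.

Lemma doeblin_bound (Q1 Q2 h : V -> R) D :
  (forall z, 0 <= Q1 z) -> \sum_z Q1 z = 1 ->
  (forall z, z \notin S -> Q1 z = 0) -> eps <= Q1 z0 ->
  (forall z, 0 <= Q2 z) -> \sum_z Q2 z = 1 ->
  (forall z, z \notin S -> Q2 z = 0) -> eps <= Q2 z0 ->
  (forall z z', z \in S -> z' \in S -> `|h z - h z'| <= D) ->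
  `|\sum_z Q1 z * h z - \sum_z Q2 z * h z| <= (1 - eps) * D.
Proof.
move=> Q1_ge0 Q1_sum1 Q1_out eps_Q1 Q2_ge0 Q2_sum1 Q2_out eps_Q2 h_osc.
have [zm zmS zm_min] := arg_minP (P := fun z => z \in S) h z0S.
have h_bounds z : z \in S -> h zm <= h z <= h zm + D.
  move=> zS; rewrite zm_min //= -lerBlDl.
  by have := h_osc _ _ zS zmS; rewrite ler_norml => /andP[].
have /andP[l1 u1] := doeblin_sum_bounds Q1_ge0 Q1_sum1 Q1_out eps_Q1 h_bounds.
have /andP[l2 u2] := doeblin_sum_bounds Q2_ge0 Q2_sum1 Q2_out eps_Q2 h_bounds.
rewrite ler_norml; apply/andP; split; lra.
Qed.

End Doeblin.

Section Wasserstein.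
Variables (R : realType) (V : finType) (e : rel V) (mu nu : V -> R).
Hypotheses (mu_ge0 : forall x, 0 <= mu x) (nu_ge0 : forall x, 0 <= nu x).
Hypotheses (mu_sum1 : \sum_x mu x = 1) (nu_sum1 : \sum_x nu x = 1).

Lemma transport_cost_ge0 P : transport_plan mu nu P -> 0 <= transport_cost e P.
Proof.
move=> [P_ge0 _]; do 2![apply: sumr_ge0 => ? _].
by apply: mulr_ge0; rewrite ?ler0n.
Qed.

Lemma product_plan : transport_plan mu nu (fun x y => mu x * nu y).
Proof.
split; first by move=> x y; apply: mulr_ge0.
split=> [x|y]; first by rewrite -mulr_sumr nu_sum1 mulr1.
by rewrite -mulr_suml mu_sum1 mul1r.
Qed.

Let cost_set :=
  [set c : R | exists P, transport_plan mu nu P /\ c = transport_cost e P].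

Let cost_set_nonempty : cost_set !=set0.
Proof.
exists (transport_cost e (fun x y => mu x * nu y)), (fun x y => mu x * nu y).
by split; first exact: product_plan.
Qed.

Lemma wasserstein_ge0 : 0 <= wasserstein e mu nu.
Proof.
apply: lb_le_inf; first exact: cost_set_nonempty.
by move=> c [P [hP ->]]; apply: transport_cost_ge0.
Qed.

Lemma wasserstein_le_cost P :
  transport_plan mu nu P -> wasserstein e mu nu <= transport_cost e P.
Proof.
move=> hP; apply: (ge_inf (E := cost_set)); last by exists P.
by exists 0 => c [Q [hQ ->]]; apply: transport_cost_ge0.
Qed.

Lemma row_off_diagonal_le_cost P x : transport_plan mu nu P ->
  \sum_(y | y != x) P x y <= transport_cost e P.
Proof.
move=> [P_ge0 _]; rewrite /transport_cost.
apply: le_trans (_ : _ <= \sum_y (gdist e x y)%:R * P x y) _.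
  rewrite [leRHS](bigD1 x) //= -[leLHS]add0r lerD ?mulr_ge0 ?ler0n //.
  by apply: ler_sum => y neq_yx; rewrite ler_peMl // ler1n gdist_gt0 // eq_sym.
rewrite [leRHS](bigD1 x) //= lerDl.
by apply: sumr_ge0 => a _; apply: sumr_ge0 => b _; rewrite mulr_ge0 ?ler0n.
Qed.

Lemma col_off_diagonal_le_cost P y : transport_plan mu nu P ->
  \sum_(x | x != y) P x y <= transport_cost e P.
Proof.
move=> [P_ge0 _]; rewrite /transport_cost exchange_big /=.
apply: le_trans (_ : _ <= \sum_x (gdist e x y)%:R * P x y) _.
  rewrite [leRHS](bigD1 y) //= -[leLHS]add0r lerD ?mulr_ge0 ?ler0n //.
  by apply: ler_sum => x neq_xy; rewrite ler_peMl // ler1n gdist_gt0.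
rewrite [leRHS](bigD1 y) //= lerDl.
by apply: sumr_ge0 => a _; apply: sumr_ge0 => b _; rewrite mulr_ge0 ?ler0n.
Qed.

Lemma dist_le_transport_cost P x :
  transport_plan mu nu P -> `|mu x - nu x| <= transport_cost e P.
Proof.
move=> hP; have row := row_off_diagonal_le_cost x hP.
have col := col_off_diagonal_le_cost x hP.
case: hP => [P_ge0 [P_mu P_nu]].
have row_ge0 : 0 <= \sum_(y | y != x) P x y by apply: sumr_ge0.
have col_ge0 : 0 <= \sum_(y | y != x) P y x by apply: sumr_ge0.
rewrite -P_mu -P_nu (bigD1 x) //= [X in _ - X](bigD1 x) //= ler_norml.
apply/andP; split; lra.
Qed.

Lemma dist_le_wasserstein x : `|mu x - nu x| <= wasserstein e mu nu.
Proof.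
apply: lb_le_inf; first exact: cost_set_nonempty.
by move=> c [P [hP ->]]; apply: dist_le_transport_cost.
Qed.

Let common x := Num.min (mu x) (nu x).
Let excess := \sum_x (mu x - common x).

Let mu_excess_ge0 x : 0 <= mu x - common x.
Proof. by rewrite subr_ge0 ge_min lexx. Qed.

Let nu_excess_ge0 x : 0 <= nu x - common x.
Proof. by rewrite subr_ge0 ge_min lexx orbT. Qed.

Let sum_nu_excess : \sum_x (nu x - common x) = excess.
Proof. by rewrite /excess !sumrB mu_sum1 nu_sum1. Qed.

Let excess_ge0 : 0 <= excess.
Proof. exact: sumr_ge0. Qed.

(* also holds when [excess = 0], since then every [F x] vanishes *)
Let mulfK_excess (F : V -> R) : (forall x, 0 <= F x) -> \sum_x F x = excess ->
  forall x, F x * excess / excess = F x.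
Proof.
move=> F_ge0 F_sum x; have [excess0|/mulfK -> //] := eqVneq excess 0.
rewrite excess0 mulr0 mul0r; rewrite excess0 in F_sum.
by rewrite (psumr_eq0P _ F_sum).
Qed.

Let excess_plan x y := (mu x - common x) * (nu y - common y) / excess.

Definition min_coupling x y := (if x == y then common x else 0) + excess_plan x y.

Lemma min_coupling_plan : transport_plan mu nu min_coupling.
Proof.
split; [|split] => [x y|x|y].
- rewrite addr_ge0 ?divr_ge0 ?mulr_ge0 //.
  by case: eqP; rewrite ?le_min ?mu_ge0 ?nu_ge0.
- rewrite big_split /= (bigD1 x) //= eqxx big1 => [|y /negbTE]; last first.
    by rewrite eq_sym => ->.
  rewrite addr0 /excess_plan -mulr_suml -mulr_sumr sum_nu_excess.
  by rewrite (mulfK_excess mu_excess_ge0) // addrC subrK.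
- rewrite big_split /= (bigD1 y) //= eqxx big1 => [|x /negbTE ->] //.
  rewrite addr0 /excess_plan -!mulr_suml -/excess [_ * (_ - _)]mulrC.
  by rewrite (mulfK_excess nu_excess_ge0) // addrC subrK.
Qed.

Lemma wasserstein_le_sum_dist :
  wasserstein e mu nu <= #|V|%:R * \sum_x `|mu x - nu x|.
Proof.
apply: le_trans (wasserstein_le_cost min_coupling_plan) _.
have excess_le : excess <= \sum_x `|mu x - nu x|.
  apply: ler_sum => x _; rewrite /common minEle; case: ifP => _.
    by rewrite subrr.
  exact: ler_norm.
apply: le_trans (ler_wpM2l (ler0n _ _) excess_le).
have sum_excess_plan : \sum_x \sum_y excess_plan x y = excess.
  under eq_bigr do rewrite -mulr_suml -mulr_sumr sum_nu_excess.
  rewrite -!mulr_suml -/excess.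
  by have [->|/mulfK -> //] := eqVneq excess 0; rewrite !mul0r.
rewrite -sum_excess_plan mulr_sumr; apply: ler_sum => x _.
rewrite mulr_sumr; apply: ler_sum => y _.
have -> : (gdist e x y)%:R * min_coupling x y = (gdist e x y)%:R * excess_plan x y.
  by rewrite /min_coupling; case: eqP => [->|_]; rewrite ?gdist_refl ?mul0r ?add0r.
by rewrite ler_wpM2r ?divr_ge0 ?mulr_ge0 // ler_nat gdist_le_card.
Qed.

End Wasserstein.

Definition merging (R : realType) (V : finType) (mu nu : nat -> V -> R) :=
  forall y, (fun k => mu k y - nu k y) @ \oo --> 0.

Lemma merging_sum_dist (R : realType) (V : finType) (mu nu : nat -> V -> R) :
  merging mu nu -> (fun k => \sum_y `|mu k y - nu k y|) @ \oo --> 0.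
Proof. by move=> mu_nu; apply: cvg_sum0 => y; apply/norm_cvg0P. Qed.

Lemma wasserstein_cvg0P (R : realType) (V : finType) (e : rel V)
    (mu nu : nat -> V -> R) :
  (forall k x, 0 <= mu k x) -> (forall k x, 0 <= nu k x) ->
  (forall k, \sum_x mu k x = 1) -> (forall k, \sum_x nu k x = 1) ->
  (fun k => wasserstein e (mu k) (nu k)) @ \oo --> 0 <-> merging mu nu.
Proof.
move=> mu_ge0 nu_ge0 mu_sum1 nu_sum1; split=> [W0 y | /merging_sum_dist dist0].
  apply/norm_cvg0P; apply: (squeeze_cvgr _ (cvg_cst (0 : R)) W0).
  by apply: nearW => k; rewrite normr_ge0 dist_le_wasserstein.
have upper0 : (fun k => #|V|%:R * \sum_y `|mu k y - nu k y|) @ \oo --> (0 : R).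
  by have := cvgM (cvg_cst (#|V|%:R : R)) dist0; rewrite mulr0; apply.
apply: (squeeze_cvgr _ (cvg_cst (0 : R)) upper0); apply: nearW => k.
by rewrite wasserstein_ge0 ?wasserstein_le_sum_dist.
Qed.

Lemma ler_sum_term (R : numDomainType) (I : finType) (F : I -> R) j :
  (forall i, 0 <= F i) -> F j <= \sum_i F i.
Proof. by move=> F_ge0; rewrite (bigD1 j) //= lerDl sumr_ge0. Qed.

Section RandomWalk.
Variables (R : realType) (V : finType) (e : rel V).
Hypotheses (e_sym : symmetric e) (e_irr : irreflexive e).
Hypotheses (e_conn : connected_graph e) (V_gt1 : (1 < #|V|)%N).

Lemma exists_neighbor x : exists y, e x y.
Proof.
have [y neq_yx] : exists y, y != x.
  move: V_gt1; rewrite (cardD1 x) ltnS => /card_gt0P[y].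
  by rewrite !inE => /andP[neq_yx _]; exists y.
have [[|n]] := e_conn x y; first by rewrite walk_len0 eq_sym (negbTE neq_yx).
by rewrite walk_lenS => /existsP[z /andP[exz _]]; exists z.
Qed.

Lemma deg_gt0 x : (0 < deg e x)%N.
Proof.
by have [y exy] := exists_neighbor x; apply/card_gt0P; exists y; rewrite inE.
Qed.

Lemma sum_neighbors x (c : R) : \sum_y (if e x y then c else 0) = c * (deg e x)%:R.
Proof.
rewrite -big_mkcond /= sumr_const /deg cardsE mulr_natr.
by congr (_ *+ _); apply: eq_card => y; rewrite !inE.
Qed.

Lemma walk_len_bounded z0 :
  exists L, forall x, exists2 n, (n <= L)%N & walk_len e x z0 n.
Proof.
exists (\sum_y xchoose (e_conn y z0))%N => x; exists (xchoose (e_conn x z0)).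
  by rewrite (bigD1 x) //= leq_addr.
exact: xchooseP.
Qed.

(* Otherwise the parity of a walk from [z0] would be a proper 2-colouring. *)
Lemma odd_closed_walk z0 : ~ bipartite e -> exists2 C, odd C & walk_len e z0 z0 C.
Proof.
move=> not_bip.
case: (pselect (exists2 C, odd C & walk_len e z0 z0 C)) => // no_odd.
case: not_bip; exists (fun x => odd (xchoose (e_conn z0 x))) => x y exy.
have z0x := xchooseP (e_conn z0 x); have z0y := xchooseP (e_conn z0 y).
set a := xchoose (e_conn z0 x) in z0x *; set b := xchoose (e_conn z0 y) in z0y *.
have z0z0 : walk_len e z0 z0 (a + 1 + b).
  apply: walk_lenD (walk_len_sym e_sym z0y).
  by apply: walk_lenD z0x _; rewrite walk_len1.
have : ~~ odd (a + 1 + b) by apply/negP => odd_ab; apply: no_odd; exists (a + 1 + b).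
by rewrite !oddD /=; case: (odd a); case: (odd b).
Qed.

Definition stationary x : R := (deg e x)%:R / \sum_z (deg e z)%:R.

Lemma sum_deg_gt0 : 0 < \sum_z (deg e z)%:R :> R.
Proof.
have [x _] : exists x : V, x \in V by apply/card_gt0P; apply: ltn_trans V_gt1.
by apply: lt_le_trans (ler_sum_term x _) => [|z]; rewrite ?ltr0n ?deg_gt0 ?ler0n.
Qed.

Lemma stationary_gt0 x : 0 < stationary x.
Proof. by rewrite divr_gt0 ?sum_deg_gt0 // ltr0n deg_gt0. Qed.

Lemma sum_stationary : \sum_x stationary x = 1.
Proof. by rewrite -mulr_suml divff // gt_eqF // sum_deg_gt0. Qed.

Lemma stationary_lt1 x : stationary x < 1.
Proof.
have [z exz] := exists_neighbor x.
have neq_zx : z != x by apply: contraTneq exz => ->; rewrite e_irr.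
rewrite -sum_stationary (bigD1 x) //= ltrDl (bigD1 z) //=.
apply: ltr_wpDr; last exact: stationary_gt0.
by apply: sumr_ge0 => y _; rewrite ltW ?stationary_gt0.
Qed.

Section Laziness.
Variable g : R.
Hypotheses (g_ge0 : 0 <= g) (g_le1 : g <= 1).
Local Notation walk := (walk_dist e g).

Lemma trans_ge0 x y : 0 <= trans e g x y.
Proof.
rewrite /trans addr_ge0 //; first by case: eqP.
by case: ifP => // _; rewrite divr_ge0 // subr_ge0.
Qed.

Lemma sum_trans x : \sum_y trans e g x y = 1.
Proof.
rewrite big_split /= sum_neighbors (bigD1 x) //= eqxx big1 => [|y /negbTE].
  by rewrite addr0 divfK ?pnatr_eq0 -?lt0n ?deg_gt0 // addrC subrK.
by rewrite eq_sym => ->.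
Qed.

Lemma walk_dist_ge0 w k y : 0 <= walk w k y.
Proof.
elim: k y => [|k IHk] y /=; first by case: eqP.
by apply: sumr_ge0 => x _; rewrite mulr_ge0 ?trans_ge0.
Qed.

Lemma sum_walk_dist w k : \sum_y walk w k y = 1.
Proof.
elim: k => [|k IHk] /=.
  by rewrite (bigD1 w) //= eqxx big1 ?addr0 // => y /negbTE ->.
rewrite exchange_big /= -[RHS]IHk; apply: eq_bigr => x _.
by rewrite -mulr_sumr sum_trans mulr1.
Qed.

Lemma walk_dist_le1 w k y : walk w k y <= 1.
Proof. by rewrite -(sum_walk_dist w k) ler_sum_term // => z; apply: walk_dist_ge0. Qed.

Lemma walk_dist1 w y : walk w 1 y = trans e g w y.
Proof.
rewrite /= (bigD1 w) //= eqxx mul1r big1 ?addr0 // => x /negbTE ->.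
by rewrite mul0r.
Qed.

Lemma walk_distD w m n y :
  walk w (m + n) y = \sum_x walk w m x * walk x n y.
Proof.
elim: n y => [|n IHn] y.
  rewrite addn0 /= (bigD1 y) //= eqxx mulr1 big1 ?addr0 // => x neq_xy.
  by rewrite eq_sym (negbTE neq_xy) mulr0.
rewrite addnS /=; under eq_bigr do rewrite IHn mulr_suml.
rewrite exchange_big /=; apply: eq_bigr => x _.
by rewrite mulr_sumr; apply: eq_bigr => z _; rewrite mulrA.
Qed.

Lemma walk_dist_gt0 x y n : g < 1 -> walk_len e x y n -> 0 < walk x n y.
Proof.
move=> g_lt1; elim: n x => [|n IHn] x.
  by rewrite walk_len0 => /eqP ->; rewrite /= eqxx.
rewrite walk_lenS => /existsP[z /andP[exz /IHn zy]].
rewrite -add1n walk_distD; apply: lt_le_trans (ler_sum_term z _); last first.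
  by move=> i; rewrite mulr_ge0 ?walk_dist_ge0.
rewrite mulr_gt0 // walk_dist1 /trans exz ltr_wpDl //; first by case: eqP.
by rewrite divr_gt0 ?subr_gt0 // ltr0n deg_gt0.
Qed.

Lemma walk_dist_gt0_lazy x y m n :
  0 < g -> (m <= n)%N -> 0 < walk x m y -> 0 < walk x n y.
Proof.
move=> g_gt0 /subnK <-; elim: (n - m)%N => [|d IHd] xy; first by rewrite add0n.
rewrite addSn /=; apply: lt_le_trans (ler_sum_term y _); last first.
  by move=> i; rewrite mulr_ge0 ?walk_dist_ge0 ?trans_ge0.
by rewrite mulr_gt0 ?IHd // /trans eqxx e_irr addr0.
Qed.

Section Merging.
Variables (S : pred V) (z0 : V) (M : nat).
Hypotheses (z0S : z0 \in S) (M_gt0 : (0 < M)%N).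
Hypothesis S_closed : forall x z, x \in S -> z \notin S -> walk x M z = 0.
Hypothesis reach_z0 : forall x, x \in S -> 0 < walk x M z0.

Lemma walk_dist_contract eps j r x x' y :
  (forall x, x \in S -> eps <= walk x M z0) -> x \in S -> x' \in S ->
  `|walk x (j * M + r) y - walk x' (j * M + r) y| <= (1 - eps) ^+ j.
Proof.
move=> eps_le; elim: j x x' => [|j IHj] x x' xS x'S.
  rewrite expr0 mul0n add0n ler_norml.
  have := walk_dist_le1 x r y; have := walk_dist_le1 x' r y.
  have := walk_dist_ge0 x r y; have := walk_dist_ge0 x' r y.
  by move=> *; apply/andP; split; lra.
rewrite mulSn -addnA !walk_distD exprS.
exact: (doeblin_bound z0S
  (walk_dist_ge0 x M) (sum_walk_dist x M) (fun z => S_closed (z := z) xS)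
  (eps_le x xS) (walk_dist_ge0 x' M) (sum_walk_dist x' M)
  (fun z => S_closed (z := z) x'S) (eps_le x' x'S) (fun z z' => IHj z z')).
Qed.

Lemma walk_dist_merge x x' y : x \in S -> x' \in S ->
  (fun k => walk x k y - walk x' k y) @ \oo --> 0.
Proof.
move=> xS x'S.
have [xm xmS xm_min] := arg_minP (P := fun x => x \in S) (fun x => walk x M z0) z0S.
pose eps := walk xm M z0.
have eps_gt0 : 0 < eps := reach_z0 xmS.
have eps_le1 : eps <= 1 := walk_dist_le1 _ _ _.
have contraction0 : (fun k => (1 - eps) ^+ (k %/ M)) @ \oo --> 0.
  apply: (cvgn_comp_unbounded (phi := fun k => k %/ M)%N (fun j => _ ^+ j)).
    by move=> N; exists (N * M)%N => k; rewrite leq_divRL.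
  by apply: cvg_expr; rewrite ger0_norm ?subr_ge0 //; lra.
apply/norm_cvg0P; apply: (squeeze_cvgr _ (cvg_cst (0 : R)) contraction0).
apply: nearW => k; rewrite normr_ge0 /= {1 2}(divn_eq k M).
exact: walk_dist_contract.
Qed.

End Merging.

Lemma stationary_trans y : \sum_x stationary x * trans e g x y = stationary y.
Proof.
have sum_deg_neq0 : \sum_z (deg e z)%:R != 0 :> R by rewrite gt_eqF // sum_deg_gt0.
rewrite /trans; under eq_bigr do rewrite mulrDr.
rewrite big_split /= (bigD1 y) //= eqxx big1 ?addr0 => [|x /negbTE ->]; last first.
  by rewrite mulr0.
have -> : \sum_x stationary x * (if e x y then (1 - g) / (deg e x)%:R else 0) =
          \sum_x (if e y x then (1 - g) / \sum_z (deg e z)%:R else 0).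
  apply: eq_bigr => x _; rewrite e_sym; case: (e y x); rewrite ?mulr0 //.
  have deg_neq0 : (deg e x)%:R != 0 :> R by rewrite pnatr_eq0 -lt0n deg_gt0.
  by rewrite /stationary; field; rewrite sum_deg_neq0 deg_neq0.
by rewrite sum_neighbors /stationary; field.
Qed.

Lemma stationary_walk_dist k y : \sum_x stationary x * walk x k y = stationary y.
Proof.
elim: k y => [|k IHk] y /=.
  rewrite (bigD1 y) //= eqxx mulr1 big1 ?addr0 // => x neq_xy.
  by rewrite eq_sym (negbTE neq_xy) mulr0.
under eq_bigr do rewrite mulr_sumr.
rewrite exchange_big /= -[RHS]stationary_trans; apply: eq_bigr => z _.
by rewrite -IHk mulr_suml; apply: eq_bigr => x _; rewrite mulrA.
Qed.

Lemma lazy_walk_dist_gt0 z0 : 0 < g -> g < 1 ->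
  exists2 M, (0 < M)%N & forall x, 0 < walk x M z0.
Proof.
move=> g_gt0 g_lt1; have [L walks_le_L] := walk_len_bounded z0.
exists L.+1 => // x; have [n le_nL xz0] := walks_le_L x.
exact: walk_dist_gt0_lazy g_gt0 (leqW le_nL) (walk_dist_gt0 g_lt1 xz0).
Qed.

Lemma nonbipartite_walk_dist_gt0 z0 : g < 1 -> ~ bipartite e ->
  exists2 M, (0 < M)%N & forall x, 0 < walk x M z0.
Proof.
move=> g_lt1 not_bip; have [C odd_C z0z0] := odd_closed_walk z0 not_bip.
have [L walks_le_L] := walk_len_bounded z0.
exists (C + L)%N => [|x]; first by case: C odd_C {z0z0}.
have [n le_nL xz0] := walks_le_L x; apply: walk_dist_gt0 g_lt1 _.
have z0_nb := exists_neighbor z0.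
have [odd_CLn|even_CLn] := boolP (odd (C + L - n)).
  apply: (walk_len_pad e_sym z0_nb (walk_lenD xz0 z0z0)); first lia.
  have -> : (C + L - (n + C) = L - n)%N by lia.
  by move: odd_CLn; rewrite -addnBA // oddD odd_C.
by apply: (walk_len_pad e_sym z0_nb xz0) => //; lia.
Qed.

Lemma bipartite_walk_dist_gt0 (f : V -> bool) z0 : g < 1 ->
  (forall x y, e x y -> f x != f y) ->
  exists2 M, (0 < M)%N /\ ~~ odd M & forall x, f x = f z0 -> 0 < walk x M z0.
Proof.
move=> g_lt1 f_proper; have [L walks_le_L] := walk_len_bounded z0.
exists L.+1.*2 => [|x fx]; first by rewrite odd_double.
have [n le_nL xz0] := walks_le_L x; apply: walk_dist_gt0 g_lt1 _.
have even_n : ~~ odd n.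
  by move: (walk_len_parity f_proper xz0); rewrite fx; case: (f z0); case: (odd n).
apply: (walk_len_pad e_sym (exists_neighbor z0) xz0); first lia.
by rewrite oddB ?odd_double ?(negbTE even_n) //; lia.
Qed.

Lemma walk_dist_cvg_stationary w y : g < 1 -> 0 < g \/ ~ bipartite e ->
  (fun k => walk w k y) @ \oo --> stationary y.
Proof.
move=> g_lt1 aperiodic.
have [M M_gt0 reach_w] : exists2 M, (0 < M)%N & forall x, 0 < walk x M w.
  by case: aperiodic => [/lazy_walk_dist_gt0|/nonbipartite_walk_dist_gt0]; apply.
apply/subr_cvg0.
have -> : (fun k => walk w k y - stationary y) =
          (fun k => \sum_x stationary x * (walk w k y - walk x k y)).
  apply/funext => k; under eq_bigr do rewrite mulrBr.
  by rewrite sumrB stationary_walk_dist -mulr_suml sum_stationary mul1r.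
apply: cvg_sum0 => x.
have predT_closed z z' : z \in predT -> z' \notin predT -> walk z M z' = 0 by [].
have := cvgM (cvg_cst (stationary x))
  (walk_dist_merge isT M_gt0 predT_closed (fun x _ => reach_w x) y isT isT).
by rewrite mulr0; apply.
Qed.

Section NonLazy.
Hypothesis g0 : g = 0.

Lemma walk_dist_nonlazy_step w k y : walk w k.+1 y + walk w k y <= 1.
Proof.
rewrite -lerBrDr -(sum_walk_dist w k) (bigD1 y) //= addrC addrK.
rewrite /= (bigD1 y) //= /trans eqxx e_irr addr0 [X in _ * X]g0 mulr0 add0r.
apply: ler_sum => x neq_xy; rewrite (negbTE neq_xy) add0r ler_piMr ?walk_dist_ge0 //.
case: (e x y) => //; rewrite g0 subr0 mul1r invf_le1 ?ler1n ?ltr0n; exact: deg_gt0.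
Qed.

Lemma walk_dist_bipartite_support (f : V -> bool) :
  (forall x y, e x y -> f x != f y) ->
  forall x k y, walk x k y != 0 -> f y = f x (+) odd k.
Proof.
move=> f_proper x k; elim: k => [|k IHk] y /=.
  by case: (y =P x) => [->|_]; rewrite ?addbF // eqxx.
have [/existsP[z /andP[xz_ne0 zy_ne0]] _|/existsPn none] :=
  boolP [exists z, (walk x k z != 0) && (trans e g z y != 0)].
  have ezy : e z y.
    move: zy_ne0; rewrite /trans g0; case: (e z y) => //.
    by case: (z == y); rewrite addr0 eqxx.
  move: (IHk _ xz_ne0) (f_proper _ _ ezy) => /=.
  by case: (f z); case: (f y); case: (f x); case: (odd k).
rewrite big1 ?eqxx // => z _; have := none z; rewrite negb_and !negbK.
by case/orP => /eqP ->; rewrite ?mul0r ?mulr0.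
Qed.

Lemma walk_dist_bipartite_merge (f : V -> bool) u v y :
  (forall x y, e x y -> f x != f y) -> f u = f v ->
  (fun k => walk u k y - walk v k y) @ \oo --> 0.
Proof.
move=> f_proper fuv.
have g_lt1 : g < 1 by rewrite g0 ltr01.
have [M [M_gt0 even_M] reach_u] := bipartite_walk_dist_gt0 u g_lt1 f_proper.
have uS : u \in [pred x | f x == f u] by rewrite inE.
apply: (walk_dist_merge uS M_gt0) => [x z|x|//|]; rewrite !inE.
- move=> /eqP fx; apply: contraNeq => /(walk_dist_bipartite_support f_proper) ->.
  by rewrite (negbTE even_M) addbF fx.
- by move=> /eqP; apply: reach_u.
- by rewrite fuv.
Qed.

End NonLazy.
End Laziness.

Lemma walk_dist_idle w :
  walk_dist e 1 w = fun (_ : nat) y => if y == w then 1 else 0 : R.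
Proof.
apply/funext => k; apply/funext => y; elim: k y => [|k IHk] y //=.
under eq_bigr do rewrite IHk.
rewrite (bigD1 w) //= eqxx mul1r big1 => [|x /negbTE ->]; last by rewrite mul0r.
by rewrite /trans subrr mul0r if_same !addr0 eq_sym.
Qed.

End RandomWalk.

Section Convergence.
Variables (R : realType) (V : finType) (e : rel V).
Hypotheses (e_sym : symmetric e) (e_irr : irreflexive e).
Hypotheses (e_conn : connected_graph e) (V_gt1 : (1 < #|V|)%N).
Variables (u v : V) (alpha beta : R).
Hypotheses (alpha_ge0 : 0 <= alpha) (alpha_le_beta : alpha <= beta).
Hypothesis beta_le1 : beta <= 1.

Let beta_ge0 : 0 <= beta := le_trans alpha_ge0 alpha_le_beta.
Let alpha_le1 : alpha <= 1 := le_trans alpha_le_beta beta_le1.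
Local Notation mu := (walk_dist e alpha u).
Local Notation nu := (walk_dist e beta v).

Let mu_cvg_stationary y : alpha < 1 -> 0 < alpha \/ ~ bipartite e ->
  (fun k => mu k y) @ \oo --> stationary R e y.
Proof. exact: walk_dist_cvg_stationary. Qed.

Let nu_cvg_stationary y : beta < 1 -> 0 < beta \/ ~ bipartite e ->
  (fun k => nu k y) @ \oo --> stationary R e y.
Proof. exact: walk_dist_cvg_stationary. Qed.

Lemma merging_aperiodic : alpha < 1 -> 0 < alpha \/ ~ bipartite e ->
  beta < 1 -> 0 < beta \/ ~ bipartite e -> merging mu nu.
Proof.
move=> alpha_lt1 alpha_aperiodic beta_lt1 beta_aperiodic y.
have := cvgB (mu_cvg_stationary (y := y) alpha_lt1 alpha_aperiodic)
  (nu_cvg_stationary (y := y) beta_lt1 beta_aperiodic).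
by rewrite subrr; apply.
Qed.

Lemma merging_of_cases :
  [\/ 0 < alpha /\ beta < 1,
      alpha = 1 /\ beta = 1 /\ u = v,
      ~ bipartite e /\ alpha = 0 /\ beta < 1
    | alpha = 0 /\ beta = 0 /\ exists n : nat, ~~ odd n /\ walk_len e u v n] ->
  merging mu nu.
Proof.
case=> [[alpha_gt0 beta_lt1]|[-> [-> ->]] y|[not_bip [alpha0 beta_lt1]]|].
- have beta_gt0 := lt_le_trans alpha_gt0 alpha_le_beta.
  by apply: merging_aperiodic; [exact: le_lt_trans beta_lt1|left|done|left].
- by under eq_cvg do rewrite subrr; apply: cvg_cst.
- by apply: merging_aperiodic; rewrite ?alpha0 ?ltr01 //; right.
move=> [alpha0 [beta0 [n [even_n uv]]]].
case: (pselect (bipartite e)) => [[f f_proper]|not_bip]; last first.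
  by apply: merging_aperiodic; rewrite ?alpha0 ?beta0 ?ltr01 //; right.
move=> y; rewrite alpha0 beta0.
apply: (walk_dist_bipartite_merge e_sym e_conn V_gt1 (lexx 0) ler01 (erefl 0) y
  f_proper).
by rewrite (walk_len_parity f_proper uv) (negbTE even_n) addbF.
Qed.

Lemma merging_idle_eq : alpha = 1 -> beta = 1 -> merging mu nu -> u = v.
Proof.
move=> alpha1 beta1 /(_ v); rewrite alpha1 beta1 !walk_dist_idle /= eqxx.
move=> /(cvg_unique (@Rhausdorff R) (cvg_cst _)).
case: (v =P u) => [-> //|_] /eqP.
by rewrite sub0r oppr_eq0 oner_eq0.
Qed.

Lemma not_merging_idle_lazy : 0 < alpha -> alpha < 1 -> beta = 1 -> ~ merging mu nu.
Proof.
move=> alpha_gt0 alpha_lt1 beta1 /(_ v).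
rewrite beta1 walk_dist_idle /= eqxx => /subr_cvg0 mu_v1.
have mu_v := mu_cvg_stationary (y := v) alpha_lt1 (or_introl alpha_gt0).
have := stationary_lt1 R e_irr e_conn V_gt1 v.
by rewrite (cvg_unique (@Rhausdorff R) mu_v mu_v1) ltxx.
Qed.

Lemma not_merging_idle_nonlazy : alpha = 0 -> beta = 1 -> ~ merging mu nu.
Proof.
move=> alpha0 beta1 /(_ v).
rewrite beta1 walk_dist_idle /= eqxx => /subr_cvg0 mu_v1.
have mu_v1S : (fun k => mu k.+1 v) @ \oo --> (1 : R).
  by rewrite (cvg_shiftS (fun k => mu k v)).
have : (1 + 1 : R) <= 1.
  apply: (ler_cvg_to (cvgD mu_v1S mu_v1) (cvg_cst _)); apply: nearW => k.
  exact: (walk_dist_nonlazy_step e_irr e_conn V_gt1 alpha_ge0 alpha_le1 alpha0).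
lra.
Qed.

Lemma not_merging_bipartite_lazy :
  bipartite e -> alpha = 0 -> 0 < beta -> beta < 1 -> ~ merging mu nu.
Proof.
move=> [f f_proper] alpha0 beta_gt0 beta_lt1 /(_ u) mu_nu.
have nu_u := nu_cvg_stationary (y := u) beta_lt1 (or_introl beta_gt0).
have mu_u : (fun k => mu k u) @ \oo --> stationary R e u.
  by have := cvgD mu_nu nu_u; rewrite add0r; under eq_cvg do rewrite subrK; apply.
have mu_odd : (fun k => mu k.*2.+1 u) @ \oo --> stationary R e u.
  apply: (cvgn_comp_unbounded (phi := fun k => k.*2.+1)) mu_u.
  by move=> N; exists N => k; lia.
have mu_odd0 : (fun k => mu k.*2.+1 u) = fun=> 0.
  apply/funext => k; apply/eqP; apply: contraT.
  move=> /(walk_dist_bipartite_support alpha0 f_proper).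
  by rewrite oddS odd_double; case: (f u).
have := stationary_gt0 R e_conn V_gt1 u.
rewrite mu_odd0 in mu_odd.
by rewrite (cvg_unique (@Rhausdorff R) mu_odd (cvg_cst 0)) ltxx.
Qed.

Lemma not_merging_opposite_colours (f : V -> bool) :
  (forall x y, e x y -> f x != f y) -> alpha = 0 -> beta = 0 -> f u != f v ->
  ~ merging mu nu.
Proof.
move=> f_proper alpha0 beta0 fuv /merging_sum_dist.
have sum_dist2 k : \sum_y `|mu k y - nu k y| = 2.
  rewrite -[2]/(1 + 1 : R) -{1}(sum_walk_dist e_conn V_gt1 alpha u k).
  rewrite -(sum_walk_dist e_conn V_gt1 beta v k) -big_split.
  apply: eq_bigr => y _ /=.
  have [->|mu_ne0] := eqVneq (mu k y) 0.
    by rewrite sub0r normrN add0r ger0_norm ?walk_dist_ge0.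
  have [->|nu_ne0] := eqVneq (nu k y) 0.
    by rewrite subr0 addr0 ger0_norm ?walk_dist_ge0.
  move: (walk_dist_bipartite_support alpha0 f_proper mu_ne0).
  rewrite (walk_dist_bipartite_support beta0 f_proper nu_ne0) => /eqP.
  by move: fuv; case: (f u); case: (f v); case: (odd k).
rewrite (funext sum_dist2) => /(cvg_unique (@Rhausdorff R) (cvg_cst _)) /eqP.
by rewrite pnatr_eq0.
Qed.

Lemma cases_of_merging : merging mu nu ->
  [\/ 0 < alpha /\ beta < 1,
      alpha = 1 /\ beta = 1 /\ u = v,
      ~ bipartite e /\ alpha = 0 /\ beta < 1
    | alpha = 0 /\ beta = 0 /\ exists n : nat, ~~ odd n /\ walk_len e u v n].
Proof.
move=> mu_nu.
have alpha0_or_gt0 : alpha = 0 \/ 0 < alpha.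
  by move: alpha_ge0; rewrite le0r => /predU1P.
have [beta1|beta_lt1] : beta = 1 \/ beta < 1.
  by move: beta_le1; rewrite le_eqVlt => /predU1P.
  have [alpha1|alpha_lt1] : alpha = 1 \/ alpha < 1.
    by move: alpha_le1; rewrite le_eqVlt => /predU1P.
    by apply: Or42; do !split => //; exact: merging_idle_eq.
  case: alpha0_or_gt0 => [alpha0|alpha_gt0].
    by case: (not_merging_idle_nonlazy alpha0 beta1 mu_nu).
  by case: (not_merging_idle_lazy alpha_gt0 alpha_lt1 beta1 mu_nu).
case: alpha0_or_gt0 => [alpha0|alpha_gt0]; last by apply: Or41.
case: (pselect (bipartite e)) => [bip|not_bip]; last by apply: Or43.
have [beta0|beta_gt0] : beta = 0 \/ 0 < beta.
  by move: beta_ge0; rewrite le0r => /predU1P.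
  apply: Or44; do 2!split => //; have [f f_proper] := bip.
  have [n uv] := e_conn u v; exists n; split => //.
  have [fuv|fuv] := eqVneq (f u) (f v).
    move: (walk_len_parity f_proper uv); rewrite fuv.
    by case: (f v); case: (odd n).
  by case: (not_merging_opposite_colours f_proper alpha0 beta0 fuv mu_nu).
by case: (not_merging_bipartite_lazy bip alpha0 beta_gt0 beta_lt1 mu_nu).
Qed.

End Convergence.

Theorem theorem3p4 (R : realType) (V : finType) (e : rel V)
  (u v : V) (alpha beta : R) :
  simple_graph e -> connected_graph e -> (1 < #|V|)%N ->
  0 <= alpha -> alpha <= beta -> beta <= 1 ->
  ((fun k : nat => wasserstein e (walk_dist e alpha u k) (walk_dist e beta v k))
     @ \oo --> (0 : R))
  <->
  [\/ 0 < alpha /\ beta < 1,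
      alpha = 1 /\ beta = 1 /\ u = v,
      ~ bipartite e /\ alpha = 0 /\ beta < 1
    | alpha = 0 /\ beta = 0 /\ exists n : nat, ~~ odd n /\ walk_len e u v n].
Proof.
move=> [e_sym e_irr] e_conn V_gt1 alpha_ge0 alpha_le_beta beta_le1.
have beta_ge0 := le_trans alpha_ge0 alpha_le_beta.
have alpha_le1 := le_trans alpha_le_beta beta_le1.
rewrite wasserstein_cvg0P => [|k x|k x|k|k]; last 4 first.
- exact: walk_dist_ge0.
- exact: walk_dist_ge0.
- exact: sum_walk_dist.
- exact: sum_walk_dist.
split; [exact: cases_of_merging | exact: merging_of_cases].
Qed.
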